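(* Let $B,C\subset\mathbb Z^b\times\{0,1\}$ be finite and let $M\in\mathcal M^B_C$ have a left inverse $N\in\mathcal M^C_B$ (i.e. $NM=I_B$). Then: (1) for every $P\in\mathcal M^B_C$ with $|\!|\!| N|\!|\!|_{s_0}|\!|\!| P|\!|\!|_{s_0}\leq1/2$, the matrix $M+P$ has a left inverse $N_P$ satisfying $|\!|\!| N_P|\!|\!|_{s_0}\leq2|\!|\!| N|\!|\!|_{s_0}$ and, for every $s\geq s_0$, $$|\!|\!| N_P|\!|\!|_s\leq\big(1+C(s)|\!|\!| N|\!|\!|_{s_0}|\!|\!| P|\!|\!|_{s_0}\big)|\!|\!| N|\!|\!|_s+C(s)|\!|\!| N|\!|\!|_{s_0}^2|\!|\!| P|\!|\!|_s\leq C(s)\big(|\!|\!| N|\!|\!|_s+|\!|\!| N|\!|\!|_{s_0}^2|\!|\!| P|\!|\!|_s\big),$$ where $C(s)$ is a constant depending only on $s$; (2) for every $P\in\mathcal M^B_C$ with $\|N\|_0\|P\|_0\leq1/2$, the matrix $M+P$ has a left inverse $N_P$ with $\|N_P\|_0\leq2\|N\|_0$.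
   Context: $d,\nu\geq1$, $b=\nu+d$, $s_0>(d+\nu)/2$ fixed. For $n\in\mathbb Z^b$, $|n|=\max_i|n_i|$, $\langle n\rangle=\max(|n|,1)$. For finite $B,C$, $\mathcal M^B_C$ is the space of complex matrices $(M_k^{k'})_{k\in C,k'\in B}$; $\overline B,\overline C$ are the projections on $\mathbb Z^b$; $M_i^{i'}$ is the block with rows $\{(i,a)\in C\}$ and columns $\{(i',a')\in B\}$. A norm $|\cdot|$ is fixed on complex matrices of size at most $2\times2$ with $|UW|\leq|U||W|$ and $|U|\leq|W|$ if $U$ is a submatrix of $W$. $[M(n)]:=\max_{i-i'=n}|M_i^{i'}|$ if $n\in\overline C-\overline B$, $0$ otherwise; $|\!|\!| M|\!|\!|_s^2:=K_0\sum_n[M(n)]^2\langle n\rangle^{2s}$, where $K_0>0$ is a fixed constant independent of $s$ such that the Sobolev norm $\|u\|_s^2=K_0\sum_i|u_i|^2\langle i\rangle^{2s}$ on $\mathbb T^b$ satisfies $\sup|u|\leq\|u\|_{s_0}$ and $\|u_1u_2\|_s\leq\frac12\|u_1\|_{s_0}\|u_2\|_s+\frac{C(s)}2\|u_1\|_s\|u_2\|_{s_0}$ for $s\geq s_0$ with $C(s)\geq 1$, $C(s_0)=1$. $\mathbf H_B$ is the space of vectors indexed by $B$, identified with column matrices, with $\|h\|_0:=|\!|\!| h|\!|\!|_0$, and $\|M\|_0:=\sup_{h\neq0}\|Mh\|_0/\|h\|_0$ is the corresponding operator norm. *)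

From HB Require Import structures.
From mathcomp Require Import all_boot all_order all_algebra.
From mathcomp Require Import finmap.
From mathcomp Require Import complex.
From mathcomp Require Import all_classical all_reals.
From mathcomp Require Import exp trigo.

Set Implicit Arguments.
Unset Strict Implicit.
Unset Printing Implicit Defensive.

Import Order.TTheory GRing.Theory Num.Theory.
Local Open Scope ring_scope.


Section Defs.
Variable R : realType.
Variable b : nat.

Definition Zb := 'rV[int]_b.
Definition idx := (Zb * 'I_2)%type.

Definition cabs (z : R[i]) : R := Num.sqrt (@complex.Re R z ^+ 2 + @complex.Im R z ^+ 2).

Definition supn (n : Zb) : nat := \max_(j < b) `|n ord0 j|%N.
Definition brk (n : Zb) : R := (maxn (supn n) 1)%:R.

(* A matrix (M_k^{k'})_{k in C, k' in B} is represented by a total function;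
   only the entries with k in C, k' in B are ever used below. *)
Definition cmx := idx -> idx -> R[i].
Definition cvec := idx -> R[i].

Definition rowsof (C : {fset idx}) (i : Zb) : seq 'I_2 :=
  [seq a <- enum 'I_2 | (i, a) \in C].

Definition block (C B : {fset idx}) (M : cmx) (i1 i2 : Zb)
  : 'M[R[i]]_(size (rowsof C i1), size (rowsof B i2)) :=
  \matrix_(p, q) M (i1, nth ord0 (rowsof C i1) p) (i2, nth ord0 (rowsof B i2) q).

Variable nrm : forall m n : nat, 'M[R[i]]_(m, n) -> R.
Variable K0 : R.

(* [M(n)] for M in M^B_C (rows C, columns B) *)
Definition brkM (C B : {fset idx}) (M : cmx) (n : Zb) : R :=
  \big[Num.max/0]_(k <- C) \big[Num.max/0]_(k' <- B)
     (if k.1 - k'.1 == n then nrm (block C B M k.1 k'.1) else 0).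

Definition diffs (C B : {fset idx}) : {fset Zb} := [fset (k.1 - k'.1)%R | k in C, k' in B]%fset.

Definition tnorm (s : R) (C B : {fset idx}) (M : cmx) : R :=
  Num.sqrt (K0 * \sum_(n <- diffs C B) brkM C B M n ^+ 2 * brk n `^ (2 * s)).

Definition addm (M P : cmx) : cmx := fun k k' => M k k' + P k k'.
Definition mulm (C : {fset idx}) (N M : cmx) : cmx :=
  fun k k'' => \sum_(k' <- C) N k k' * M k' k''.
Definition left_inv (B C : {fset idx}) (N M : cmx) : Prop :=
  forall k k', k \in B -> k' \in B -> mulm C N M k k' = (k == k')%:R.

(* vectors in H_B identified with column matrices (single column index (0,0)) *)
Definition colidx : idx := (0, ord0).
Definition colm (h : cvec) : cmx := fun k c => if c == colidx then h k else 0.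
Definition vnorm (B : {fset idx}) (h : cvec) : R := tnorm 0 B [fset colidx]%fset (colm h).
Definition matvec (B : {fset idx}) (M : cmx) (h : cvec) : cvec :=
  fun k => \sum_(k' <- B) M k k' * h k'.
Definition opnorm (C B : {fset idx}) (M : cmx) : R :=
  sup [set vnorm C (matvec B M h) / vnorm B h
      | h in [set h : cvec | exists2 k, k \in B & h k != 0]]%classic.

End Defs.

Definition small_mx_norm (R : realType) (nrm : forall m n : nat, 'M[R[i]]_(m, n) -> R) : Prop :=
  (forall m n (U V : 'M[R[i]]_(m, n)), (m <= 2)%N -> (n <= 2)%N ->
     [/\ 0 <= nrm _ _ U, (nrm _ _ U = 0 -> U = 0),
         (forall c : R[i], nrm _ _ (c *: U) = cabs c * nrm _ _ U)
       & nrm _ _ (U + V) <= nrm _ _ U + nrm _ _ V]) /\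
  (forall m k n (U : 'M[R[i]]_(m, k)) (W : 'M[R[i]]_(k, n)),
     (m <= 2)%N -> (k <= 2)%N -> (n <= 2)%N -> nrm _ _ (U *m W) <= nrm _ _ U * nrm _ _ W) /\
  (forall m n m' n' (U : 'M[R[i]]_(m, n)) (W : 'M[R[i]]_(m', n'))
     (f : 'I_m -> 'I_m') (g : 'I_n -> 'I_n'),
     (m' <= 2)%N -> (n' <= 2)%N ->
     {homo f : x y / (x < y)%N} -> {homo g : x y / (x < y)%N} ->
     U = \matrix_(p, q) W (f p) (g q) -> nrm _ _ U <= nrm _ _ W).

(* Trigonometric polynomials on T^b: coefficients u on a finite set S (zero elsewhere) *)
Definition sobn (R : realType) (b : nat) (K0 s : R) (S : {fset Zb b}) (u : Zb b -> R[i]) : R :=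
  Num.sqrt (K0 * \sum_(j <- S) cabs (u j) ^+ 2 * brk R j `^ (2 * s)).

Definition expi (R : realType) (t : R) : R[i] := Complex (cos t) (sin t).

Definition tpval (R : realType) (b : nat) (S : {fset Zb b}) (u : Zb b -> R[i]) (x : 'rV[R]_b)
  : R[i] := \sum_(j <- S) u j * expi (\sum_(l < b) (j ord0 l)%:~R * x ord0 l).

(* Fourier coefficients of the product u1 u2, supported on S1 + S2 *)
Definition sumset (b : nat) (S1 S2 : {fset Zb b}) : {fset Zb b} :=
  [fset (j + l)%R | j in S1, l in S2]%fset.
Definition convc (R : realType) (b : nat) (S1 : {fset Zb b}) (u1 : Zb b -> R[i])
  (S2 : {fset Zb b}) (u2 : Zb b -> R[i]) : Zb b -> R[i] :=
  fun n => \sum_(j <- S1) \sum_(l <- S2 | j + l == n) u1 j * u2 l.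

Definition sobolev_sup (R : realType) (b : nat) (K0 s0 : R) : Prop :=
  forall (S : {fset Zb b}) (u : Zb b -> R[i]) (x : 'rV[R]_b),
    cabs (tpval S u x) <= sobn K0 s0 S u.

Definition sobolev_prod (R : realType) (b : nat) (K0 s0 : R) (Cs : R -> R) : Prop :=
  forall (s : R), s0 <= s ->
  forall (S1 S2 : {fset Zb b}) (u1 u2 : Zb b -> R[i]),
    sobn K0 s (sumset S1 S2) (convc S1 u1 S2 u2)
      <= 2^-1 * sobn K0 s0 S1 u1 * sobn K0 s S2 u2
         + Cs s / 2 * sobn K0 s S1 u1 * sobn K0 s0 S2 u2.

From HB Require Import structures.
From mathcomp Require Import all_boot all_order all_algebra.
From mathcomp Require Import finmap.
From mathcomp Require Import complex.
From mathcomp Require Import all_classical all_reals.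
From mathcomp Require Import exp trigo.
From mathcomp Require Import ring lra.
Import Order.TTheory GRing.Theory Num.Theory.
Local Open Scope ring_scope.

Set Implicit Arguments.
Unset Strict Implicit.
Unset Printing Implicit Defensive.

(* If I + NP is injective on H_B, then Y := (I + NP)^-1 N is a left inverse
   of M + P and satisfies Y = N - N P Y.  Smallness of |||N||| |||P||| (resp.
   ||N|| ||P||) makes I + NP injective, and Y = N - NPY gives
   |||Y|||_s0 <= |||N|||_s0 + 1/2 |||Y|||_s0 and ||Y|| <= ||N|| + 1/2 ||Y||.
   For s >= s0 one uses the tame estimate
     |||XY|||_s <= 1/2 |||X|||_s0 |||Y|||_s + C(s)/2 |||X|||_s |||Y|||_s0,
   which is the Sobolev product estimate applied to the trigonometric
   polynomials with coefficients [X(n)] and [Y(n)], since [XY(n)] is bounded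
   by the convolution of these sequences; the term in |||Y|||_s on the right
   is then absorbed into the left-hand side. *)

Section WeightedSums.
Variable R : rcfType.

Lemma ler_sum_fsubset (I : choiceType) (A B : {fset I}) (G : I -> R) :
  (A `<=` B)%fset -> {in B, forall x, 0 <= G x} ->
  \sum_(i <- A) G i <= \sum_(i <- B) G i.
Proof.
move=> AB G0; rewrite [X in _ <= X](big_fsetID _ (mem A)) /=.
have -> : \sum_(i <- [fset x in B | x \in A]%fset) G i = \sum_(i <- A) G i.
  apply: eq_fbigl => x; rewrite !inE /=; apply/andP/idP => [[]//|xA].
  by split => //; apply: (fsubsetP AB).
rewrite lerDl big_seq; apply: sumr_ge0 => x.
by rewrite !inE /= => /andP[/G0].
Qed.

Lemma ler_term_fsum (I : choiceType) (B : {fset I}) (G : I -> R) x :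
  x \in B -> {in B, forall y, 0 <= G y} -> G x <= \sum_(i <- B) G i.
Proof.
move=> xB G0; have <- : \sum_(i <- [fset x]%fset) G i = G x by rewrite big_seq_fset1.
by apply: ler_sum_fsubset; rewrite ?fsub1set.
Qed.

Lemma weighted_cauchy_schwarz (I : Type) (r : seq I) (f g w : I -> R) :
  (forall i, 0 <= w i) ->
  (\sum_(i <- r) f i * g i * w i) ^+ 2
    <= (\sum_(i <- r) f i ^+ 2 * w i) * (\sum_(i <- r) g i ^+ 2 * w i).
Proof.
move=> w0.
set A := \sum_(i <- r) f i ^+ 2 * w i.
set B := \sum_(i <- r) f i * g i * w i.
set C := \sum_(i <- r) g i ^+ 2 * w i.
have quad_ge0 t : 0 <= A + 2 * t * B + t ^+ 2 * C.
  have -> : A + 2 * t * B + t ^+ 2 * C = \sum_(i <- r) (f i + t * g i) ^+ 2 * w i.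
    rewrite /A /B /C !mulr_sumr -!big_split /=; apply: eq_bigr => i _; ring.
  by apply: sumr_ge0 => i _; rewrite mulr_ge0 ?sqr_ge0.
have C0 : 0 <= C by apply: sumr_ge0 => i _; rewrite mulr_ge0 ?sqr_ge0.
have [Cz|Cn0] := eqVneq C 0.
  have [Bz|Bn0] := eqVneq B 0; first by rewrite Bz Cz mulr0 expr2 mul0r.
  have := quad_ge0 (- (A + 1) / (2 * B)); rewrite Cz mulr0 addr0.
  have -> : 2 * (- (A + 1) / (2 * B)) * B = - (A + 1) by field; rewrite Bn0.
  lra.
have Cgt0 : 0 < C by rewrite lt_def Cn0 C0.
have := quad_ge0 (- B / C).
have -> : A + 2 * (- B / C) * B + (- B / C) ^+ 2 * C = (A * C - B ^+ 2) / C.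
  by field; rewrite Cn0.
by rewrite pmulr_lge0 ?invr_gt0 // subr_ge0.
Qed.

Lemma sqr_sum_le_size (I : Type) (r : seq I) (g : I -> R) :
  (\sum_(i <- r) g i) ^+ 2 <= (size r)%:R * \sum_(i <- r) g i ^+ 2.
Proof.
have := weighted_cauchy_schwarz r (fun=> 1) g (fun=> ler01).
under eq_bigr do rewrite mul1r mulr1.
under [X in _ <= X * _]eq_bigr do rewrite expr1n mulr1.
under [X in _ <= _ * X]eq_bigr do rewrite mulr1.
by rewrite -sum1_size natr_sum.
Qed.

Lemma weighted_minkowski (I : Type) (r : seq I) (f g h w : I -> R) (K : R) :
  0 <= K -> (forall i, 0 <= w i) -> (forall i, 0 <= h i) ->
  (forall i, h i <= f i + g i) ->
  Num.sqrt (K * \sum_(i <- r) h i ^+ 2 * w i)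
    <= Num.sqrt (K * \sum_(i <- r) f i ^+ 2 * w i)
       + Num.sqrt (K * \sum_(i <- r) g i ^+ 2 * w i).
Proof.
move=> K0 w0 h0 hfg.
set A := \sum_(i <- r) f i ^+ 2 * w i.
set B := \sum_(i <- r) f i * g i * w i.
set C := \sum_(i <- r) g i ^+ 2 * w i.
have C0 : 0 <= C by apply: sumr_ge0 => i _; rewrite mulr_ge0 ?sqr_ge0.
have A0 : 0 <= A by apply: sumr_ge0 => i _; rewrite mulr_ge0 ?sqr_ge0.
have B_le : B <= Num.sqrt A * Num.sqrt C.
  rewrite -sqrtrM // (le_trans (ler_norm B)) // -sqrtr_sqr.
  exact/ler_wsqrtr/weighted_cauchy_schwarz.
have h_le : \sum_(i <- r) h i ^+ 2 * w i <= (Num.sqrt A + Num.sqrt C) ^+ 2.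
  apply: (@le_trans _ _ (A + 2 * B + C)).
    have -> : A + 2 * B + C = \sum_(i <- r) (f i + g i) ^+ 2 * w i.
      rewrite /A /B /C !mulr_sumr -!big_split /=; apply: eq_bigr => i _; ring.
    apply: ler_sum => i _; apply: ler_wpM2r => //.
    by rewrite ler_sqr ?nnegrE ?hfg // (le_trans (h0 i) (hfg i)).
  rewrite sqrrD !sqr_sqrtr //; lra.
rewrite !sqrtrM // -mulrDr; apply: ler_wpM2l; first exact: sqrtr_ge0.
rewrite -[X in _ <= X]ger0_norm ?addr_ge0 ?sqrtr_ge0 // -sqrtr_sqr.
exact: ler_wsqrtr.
Qed.

End WeightedSums.

(* Absorption of the |||Y|||_s term; [t] stands for |||N|||_s0 |||P|||_s0. *)
Lemma absorb_tame_bound (R : realFieldType) (t c x q y : R) :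
  0 <= t -> t <= 2^-1 -> 1 <= c -> 0 <= x -> 0 <= q ->
  y <= (1 + c * t) * x + c / 2 * q + t / 4 * y ->
  y <= (1 + 2 * c * t) * x + 2 * c * q.
Proof.
move=> t0 t1 c1 x0 q0 hy.
have c0 : 0 <= c by lra.
have tx : t * (t * x) <= 2^-1 * (t * x) by rewrite ler_wpM2r // mulr_ge0.
have tq : t * q <= 2^-1 * q by rewrite ler_wpM2r.
have cq : 0 <= c * q by rewrite mulr_ge0.
have ctx : 0 <= c * (t * x) by rewrite !mulr_ge0.
have ctx2 : c * (t * (t * x)) <= c * (2^-1 * (t * x)) by rewrite ler_wpM2l.
have ctq : c * (t * q) <= c * (2^-1 * q) by rewrite ler_wpM2l.
have txc : t * x <= c * (t * x) by rewrite ler_peMl // mulr_ge0.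
have pos : 0 < 1 - t / 4 by lra.
rewrite -(ler_pM2l pos).
apply: le_trans (_ : (1 + c * t) * x + c / 2 * q <= _); first by lra.
have -> : (1 - t / 4) * ((1 + 2 * c * t) * x + 2 * c * q) =
  x + 2 * (c * (t * x)) - (t * x) / 4 - (c * (t * (t * x))) / 2
  + 2 * (c * q) - (c * (t * q)) / 2 by field.
have -> : (1 + c * t) * x + c / 2 * q = x + c * (t * x) + (c * q) / 2 by field.
lra.
Qed.

Section SmallMatrixNorm.
Variable R : realType.
Variable nrm : forall m n : nat, 'M[R[i]]_(m, n) -> R.
Hypothesis hnrm : small_mx_norm nrm.

Lemma cabs0 : cabs (0 : R[i]) = 0.
Proof. by rewrite /cabs /= expr2 mul0r addr0 sqrtr0. Qed.

Lemma cabsN1 : cabs (-1 : R[i]) = 1.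
Proof. by rewrite /cabs /= oppr0 !expr2 mul0r addr0 mulrNN mulr1 sqrtr1. Qed.

Lemma cabs_real (r : R) : 0 <= r -> cabs r%:C%C = r.
Proof. by move=> r0; rewrite /cabs /= [0 ^+ 2]expr2 mul0r addr0 sqrtr_sqr ger0_norm. Qed.

Section Sized.
Variables m n : nat.
Hypotheses (hm : (m <= 2)%N) (hn : (n <= 2)%N).
Implicit Types U V : 'M[R[i]]_(m, n).

Lemma nrm_ge0 U : 0 <= nrm U.
Proof. by case: (hnrm.1 _ _ U U hm hn). Qed.

Lemma nrm_eq0 U : nrm U = 0 -> U = 0.
Proof. by case: (hnrm.1 _ _ U U hm hn). Qed.

Lemma nrmZ (c : R[i]) U : nrm (c *: U) = cabs c * nrm U.
Proof. by case: (hnrm.1 _ _ U U hm hn). Qed.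

Lemma nrmD U V : nrm (U + V) <= nrm U + nrm V.
Proof. by case: (hnrm.1 _ _ U V hm hn). Qed.

Lemma nrm0 : nrm (0 : 'M[R[i]]_(m, n)) = 0.
Proof. by rewrite -(scale0r (0 : 'M[R[i]]_(m, n))) nrmZ cabs0 mul0r. Qed.

Lemma nrmB U V : nrm (U - V) <= nrm U + nrm V.
Proof. by rewrite -[nrm V]mul1r -cabsN1 -nrmZ scaleN1r nrmD. Qed.

Lemma nrm_sum (I : Type) (r : seq I) (F : I -> 'M[R[i]]_(m, n)) :
  nrm (\sum_(i <- r) F i) <= \sum_(i <- r) nrm (F i).
Proof.
elim: r => [|x r IH]; first by rewrite !big_nil nrm0.
by rewrite !big_cons (le_trans (nrmD _ _)) // lerD2l.
Qed.

End Sized.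

Lemma nrm_mul m k n (U : 'M[R[i]]_(m, k)) (W : 'M[R[i]]_(k, n)) :
  (m <= 2)%N -> (k <= 2)%N -> (n <= 2)%N -> nrm (U *m W) <= nrm U * nrm W.
Proof. exact: hnrm.2.1. Qed.

End SmallMatrixNorm.

Section BlockNorms.
Variable R : realType.
Variable bb : nat.
Variable nrm : forall m n : nat, 'M[R[i]]_(m, n) -> R.
Hypothesis hnrm : small_mx_norm nrm.
Variable K0 : R.
Hypothesis hK0 : 0 < K0.

Local Notation idx := (idx bb).
Local Notation cmx := (cmx R bb).
Local Notation tn := (tnorm nrm K0).

Lemma size_rowsof (C : {fset idx}) i : (size (rowsof C i) <= 2)%N.
Proof. by rewrite size_filter (leq_trans (count_size _ _)) // size_enum_ord. Qed.

Lemma mem_rowsof (A : {fset idx}) i (p : 'I_(size (rowsof A i))) :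
  (i, nth ord0 (rowsof A i) p) \in A.
Proof. by have := mem_nth ord0 (ltn_ord p); rewrite mem_filter => /andP[]. Qed.

Lemma nrm_block_ge0 (C B : {fset idx}) (M : cmx) i j : 0 <= nrm (block C B M i j).
Proof. exact: nrm_ge0 (size_rowsof _ _) (size_rowsof _ _) _. Qed.

Definition proj_fset (C : {fset idx}) : {fset Zb bb} := [fset k.1 | k in C]%fset.

Lemma sum_by_blocks (V : nmodType) (C : {fset idx}) (F : idx -> V) :
  \sum_(k <- C) F k =
  \sum_(j <- proj_fset C) \sum_(r < size (rowsof C j)) F (j, nth ord0 (rowsof C j) r).
Proof.
rewrite (partition_big_imfset _ fst); apply: eq_bigr => j _.
rewrite -(big_mkord xpredT (fun r => F (j, nth ord0 (rowsof C j) r))).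
rewrite -(big_nth ord0 xpredT (fun a => F (j, a))).
rewrite -(big_map (pair j) xpredT F) -big_filter.
apply: perm_big; apply: uniq_perm.
- by rewrite filter_uniq // fset_uniq.
- rewrite map_inj_uniq; last by move=> a a' [].
  by rewrite filter_uniq // enum_uniq.
move=> [x1 x2]; rewrite mem_filter /=.
have [->|ne] := eqVneq x1 j.
  rewrite (mem_map (fun a a' (e : (j, a) = (j, a')) => f_equal snd e)).
  by rewrite mem_filter mem_enum andbT.
by apply/esym/mapP => -[a _ [e _]]; rewrite e eqxx in ne.
Qed.

Lemma block_mulm (A C B : {fset idx}) (X Y : cmx) i i'' :
  block A B (mulm C X Y) i i'' =
  \sum_(j <- proj_fset C) block A C X i j *m block C B Y j i''.
Proof.
apply/matrixP => p q; rewrite !mxE summxE /mulm sum_by_blocks.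
by apply: eq_bigr => j _; rewrite !mxE; apply: eq_bigr => r _; rewrite !mxE.
Qed.

Lemma block_ext (A B : {fset idx}) (X X' : cmx) :
  (forall k k', k \in A -> k' \in B -> X k k' = X' k k') ->
  forall i j, block A B X i j = block A B X' i j.
Proof. by move=> H i j; apply/matrixP => p q; rewrite !mxE H ?mem_rowsof. Qed.

Lemma brkM_ge0 (C B : {fset idx}) (M : cmx) n : 0 <= brkM nrm C B M n.
Proof.
apply: (big_ind (fun x => 0 <= x)) => // [x y|k _]; first by rewrite le_max => ->.
apply: (big_ind (fun x => 0 <= x)) => // [x y|k' _]; first by rewrite le_max => ->.
by case: ifP => // _; apply: nrm_block_ge0.
Qed.

Lemma brkM_le (C B : {fset idx}) (M : cmx) n c : 0 <= c ->
  (forall k k', k \in C -> k' \in B -> k.1 - k'.1 = n ->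
     nrm (block C B M k.1 k'.1) <= c) -> brkM nrm C B M n <= c.
Proof.
move=> c0 H; rewrite /brkM big_seq; apply: bigmax_le => // k kC.
rewrite big_seq; apply: bigmax_le => // k' k'B.
by case: eqP => // e; apply: H.
Qed.

Lemma nrm_block_le_brkM (C B : {fset idx}) (M : cmx) k k' : k \in C -> k' \in B ->
  nrm (block C B M k.1 k'.1) <= brkM nrm C B M (k.1 - k'.1).
Proof.
move=> kC k'B; apply: le_trans (le_bigmax_seq _ _ _ _ kC _) => //.
by apply: le_trans (le_bigmax_seq _ _ _ _ k'B _) => //; rewrite eqxx.
Qed.

Definition brk_conv (A C B : {fset idx}) (X Y : cmx) (n : Zb bb) : R :=
  \sum_(n1 <- diffs A C) \sum_(n2 <- diffs C B | n1 + n2 == n)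
     brkM nrm A C X n1 * brkM nrm C B Y n2.

Lemma brk_conv_ge0 A C B X Y n : 0 <= brk_conv A C B X Y n.
Proof.
by apply: sumr_ge0 => n1 _; apply: sumr_ge0 => n2 _; rewrite mulr_ge0 ?brkM_ge0.
Qed.

Lemma brk_conv_eq0 A C B X Y n : n \notin sumset (diffs A C) (diffs C B) ->
  brk_conv A C B X Y n = 0.
Proof.
move=> nS; apply: big1_fset => n1 n1D _; apply: big1_fset => n2 n2D /eqP e.
by move: nS; rewrite -e in_imfset2.
Qed.

Lemma brkM_mulm_le (A C B : {fset idx}) (X Y : cmx) n :
  brkM nrm A B (mulm C X Y) n <= brk_conv A C B X Y n.
Proof.
apply: brkM_le; first exact: brk_conv_ge0.
move=> k k'' kA k''B e; rewrite block_mulm.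
apply: le_trans (nrm_sum hnrm (size_rowsof _ _) (size_rowsof _ _) _ _) _.
pose G n1 := \sum_(n2 <- diffs C B | n1 + n2 == n)
     brkM nrm A C X n1 * brkM nrm C B Y n2.
apply: (@le_trans _ _ (\sum_(j <- proj_fset C) G (k.1 - j))).
  rewrite big_seq [X in _ <= X]big_seq; apply: ler_sum => j /imfsetP [k' k'C ->].
  apply: le_trans
    (nrm_mul hnrm _ _ (size_rowsof _ _) (size_rowsof _ _) (size_rowsof _ _)) _.
  apply: (@le_trans _ _ (brkM nrm A C X (k.1 - k'.1) * brkM nrm C B Y (k'.1 - k''.1))).
    by apply: ler_pM; rewrite ?nrm_block_ge0 ?nrm_block_le_brkM.
  rewrite /G big_fset_condE.
  apply: (ler_term_fsum (G := fun n2 => _ * brkM nrm C B Y n2)).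
    rewrite !inE /=; apply/andP; split; first exact: in_imfset2.
    by rewrite -e addrA subrK.
  by move=> y _; rewrite mulr_ge0 ?brkM_ge0.
have -> : \sum_(j <- proj_fset C) G (k.1 - j) =
    \sum_(n1 <- [fset k.1 - j | j in proj_fset C]%fset) G n1.
  by rewrite [RHS]big_imfset //= => x y _ _ /addrI/oppr_inj.
apply: ler_sum_fsubset.
  apply/fsubsetP => x /imfsetP [j /imfsetP [k' k'C ->] ->] /=.
  exact: in_imfset2.
by move=> x _; apply: sumr_ge0 => n2 _; rewrite mulr_ge0 ?brkM_ge0.
Qed.

Lemma brk_powR_ge0 s (n : Zb bb) : 0 <= brk R n `^ (2 * s).
Proof. exact: powR_ge0. Qed.

Lemma tnorm_ge0 s (A B : {fset idx}) (X : cmx) : 0 <= tn s A B X.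
Proof. exact: sqrtr_ge0. Qed.

Lemma sobn_brkM s (A B : {fset idx}) (X : cmx) :
  sobn K0 s (diffs A B) (fun n => (brkM nrm A B X n)%:C%C) = tn s A B X.
Proof.
congr (Num.sqrt (K0 * _)); apply: eq_bigr => n _.
by rewrite cabs_real ?brkM_ge0.
Qed.

Lemma tnorm_mulm_le_conv s (A C B : {fset idx}) (X Y : cmx) :
  tn s A B (mulm C X Y)
    <= sobn K0 s (sumset (diffs A C) (diffs C B))
         (fun n => (brk_conv A C B X Y n)%:C%C).
Proof.
set S := sumset _ _; pose w (n : Zb bb) := brk R n `^ (2 * s).
apply: ler_wsqrtr; apply: ler_wpM2l; first exact: ltW.
rewrite [X in _ <= X](eq_bigr (fun n => brk_conv A C B X Y n ^+ 2 * w n));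
  last by move=> n _; rewrite cabs_real ?brk_conv_ge0.
have w0 n : 0 <= w n by exact: brk_powR_ge0.
apply: (@le_trans _ _ (\sum_(n <- diffs A B) brk_conv A C B X Y n ^+ 2 * w n)).
  apply: ler_sum => n _; apply: ler_wpM2r; first exact: w0.
  by rewrite ler_sqr ?nnegrE ?brkM_ge0 ?brk_conv_ge0 ?brkM_mulm_le.
apply: (@le_trans _ _ (\sum_(n <- (diffs A B `|` S)%fset)
                         brk_conv A C B X Y n ^+ 2 * w n)).
  apply: (ler_sum_fsubset (G := fun n => brk_conv A C B X Y n ^+ 2 * w n)).
    exact: fsubsetUl.
  by move=> n _; rewrite mulr_ge0 ?sqr_ge0.
rewrite (big_fset_incl _ (fsubsetUr (diffs A B) S)) //.
by move=> n _ nS; rewrite brk_conv_eq0 // expr2 !mul0r.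
Qed.

Lemma tnorm_mulm (s0 : R) (Cs : R -> R) (hprod : sobolev_prod bb K0 s0 Cs) s :
  s0 <= s -> forall (A C B : {fset idx}) (X Y : cmx),
  tn s A B (mulm C X Y) <=
    2^-1 * tn s0 A C X * tn s C B Y + Cs s / 2 * tn s A C X * tn s0 C B Y.
Proof.
move=> hs A C B X Y; apply: le_trans (tnorm_mulm_le_conv _ _ _ _ _ _) _.
rewrite -!sobn_brkM.
suff -> : (fun n => (brk_conv A C B X Y n)%:C%C) =
    convc (diffs A C) (fun n => (brkM nrm A C X n)%:C%C)
          (diffs C B) (fun n => (brkM nrm C B Y n)%:C%C) by exact: hprod.
apply/funext => n; rewrite rmorph_sum; apply: eq_bigr => n1 _.
by rewrite rmorph_sum; apply: eq_bigr => n2 _; rewrite rmorphM.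
Qed.

Lemma tnorm_ext s (A B : {fset idx}) (X X' : cmx) :
  (forall k k', k \in A -> k' \in B -> X k k' = X' k k') ->
  tn s A B X = tn s A B X'.
Proof.
move=> H; congr (Num.sqrt (K0 * _)).
apply: eq_bigr => n _; congr (_ ^+ 2 * _); apply: eq_bigr => k _.
by apply: eq_bigr => k' _; rewrite (block_ext H).
Qed.

Lemma tnormB_le s (A B : {fset idx}) (Z X Y : cmx) :
  (forall k k', k \in A -> k' \in B -> Z k k' = X k k' - Y k k') ->
  tn s A B Z <= tn s A B X + tn s A B Y.
Proof.
move=> H; apply: weighted_minkowski => //; first exact: ltW.
- by move=> n; apply: brk_powR_ge0.
- by move=> n; apply: brkM_ge0.
move=> n; apply: brkM_le; first by rewrite addr_ge0 ?brkM_ge0.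
move=> k k' kA k'B <-.
have -> : block A B Z k.1 k'.1 = block A B X k.1 k'.1 - block A B Y k.1 k'.1.
  by apply/matrixP => p q; rewrite !mxE H ?mem_rowsof.
apply: le_trans (nrmB hnrm (size_rowsof _ _) (size_rowsof _ _) _ _) _.
by apply: lerD; apply: nrm_block_le_brkM.
Qed.

Lemma tnorm_cst0 s (A B : {fset idx}) : tn s A B (fun _ _ => 0) = 0.
Proof.
rewrite /tnorm big1 ?mulr0 ?sqrtr0 // => n _.
suff -> : brkM nrm A B (fun _ _ => 0) n = 0 by rewrite expr2 !mul0r.
apply/eqP; rewrite eq_le brkM_ge0 andbT; apply: brkM_le => // k k' _ _ _.
have -> : block A B (fun _ _ => 0 : R[i]) k.1 k'.1 = 0 by apply/matrixP => p q; rewrite !mxE.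
by rewrite (nrm0 hnrm) ?size_rowsof.
Qed.

Lemma tnorm_eq0 s (A B : {fset idx}) (X : cmx) : tn s A B X = 0 ->
  forall k k', k \in A -> k' \in B -> X k k' = 0.
Proof.
move=> /eqP; rewrite /tnorm sqrtr_eq0 pmulr_rle0 // => S0 k k' kA k'B.
have kin : k.1 - k'.1 \in diffs A B by apply: in_imfset2.
have := le_trans (ler_term_fsum
  (G := fun n => brkM nrm A B X n ^+ 2 * brk R n `^ (2 * s)) kin
  (fun y _ => mulr_ge0 (sqr_ge0 _) (brk_powR_ge0 _ _))) S0.
rewrite pmulr_lle0 ?powR_gt0 ?ltr0n ?leq_max ?orbT // => brk_le0.
have brk0 : brkM nrm A B X (k.1 - k'.1) = 0.
  by apply/eqP; rewrite -sqrf_eq0 eq_le brk_le0 sqr_ge0.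
have /(nrm_eq0 hnrm (size_rowsof _ _) (size_rowsof _ _)) : nrm (block A B X k.1 k'.1) = 0.
  by apply/eqP; rewrite eq_le nrm_block_ge0 andbT -brk0 nrm_block_le_brkM.
have hp : (index k.2 (rowsof A k.1) < size (rowsof A k.1))%N.
  by rewrite index_mem mem_filter mem_enum -surjective_pairing kA.
have hq : (index k'.2 (rowsof B k'.1) < size (rowsof B k'.1))%N.
  by rewrite index_mem mem_filter mem_enum -surjective_pairing k'B.
move=> /matrixP /(_ (Ordinal hp) (Ordinal hq)).
by rewrite !mxE /= !nth_index -?surjective_pairing // -index_mem.
Qed.

Lemma tnorm_colm_eq0 s (B : {fset idx}) (h : cvec R bb) :
  tn s B [fset colidx bb]%fset (colm h) = 0 -> {in B, forall k, h k = 0}.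
Proof. by move=> /tnorm_eq0 H k kB; have := H k _ kB (fset11 _); rewrite /colm eqxx. Qed.

Lemma mulm_colm (B : {fset idx}) (M : cmx) (h : cvec R bb) k c :
  mulm B M (colm h) k c = colm (matvec B M h) k c.
Proof.
rewrite /colm /mulm /matvec; case: ifP => // _.
by rewrite big1 // => k' _; rewrite mulr0.
Qed.

End BlockNorms.

Section LeftInverse.
Variable R : realType.
Variable bb : nat.

Local Notation idx := (idx bb).
Local Notation cmx := (cmx R bb).

Definition idDmx_injective (B : {fset idx}) (Q : cmx) : Prop :=
  forall h : cvec R bb, {in B, forall k, h k + matvec B Q h k = 0} ->
    {in B, forall k, h k = 0}.

Section Enumeration.
Variable B : {fset idx}.
Let n := size (enum_fset B).
Let e (i : 'I_n) : idx := nth (colidx bb) (enum_fset B) i.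

Let sum_enum (V : nmodType) (F : idx -> V) : \sum_(k <- B) F k = \sum_(i < n) F (e i).
Proof. by rewrite (big_nth (colidx bb)) big_mkord. Qed.

Let e_eq i j : (e i == e j) = (i == j).
Proof. by rewrite nth_uniq ?fset_uniq. Qed.

Let e_surj k : k \in B -> exists i : 'I_n, k = e i.
Proof.
move=> kB; have hi : (index k (enum_fset B) < n)%N by rewrite index_mem.
by exists (Ordinal hi); rewrite /e /= nth_index.
Qed.

Let sum_delta (F : 'I_n -> R[i]) a : \sum_(i < n) (e a == e i)%:R * F i = F a.
Proof.
rewrite (bigD1 a) //= eqxx mul1r big1 ?addr0 // => i ia.
by rewrite e_eq eq_sym (negPf ia) mul0r.
Qed.

(* Through the enumeration [e] of B, I + Q is a square matrix; injectivity
   says its transpose has a trivial left kernel, so it is invertible. *)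
Lemma idDmx_inverse (Q : cmx) : idDmx_injective B Q ->
  exists X : cmx,
    (forall k k', k \in B -> k' \in B ->
       \sum_(j <- B) X k j * ((j == k')%:R + Q j k') = (k == k')%:R) /\
    (forall k k', k \in B -> k' \in B ->
       \sum_(j <- B) ((k == j)%:R + Q k j) * X j k' = (k == k')%:R).
Proof.
move=> Qinj.
pose A : 'M[R[i]]_n := \matrix_(i, j) ((i == j)%:R + Q (e i) (e j)).
have Au : A \in unitmx.
  rewrite unitmxE unitfE -det_tr; apply/negP => /det0P [v vn0 vA].
  pose h (k : idx) := \sum_(i < n) (k == e i)%:R * v 0 i.
  have he j : h (e j) = v 0 j by rewrite /h sum_delta.
  have h0 : {in B, forall k, h k = 0}.
    apply: Qinj => k /e_surj [j ->]; rewrite he /matvec sum_enum.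
    transitivity ((v *m A^T) 0 j); last by rewrite vA mxE.
    rewrite mxE; under [RHS]eq_bigr do rewrite !mxE mulrDr mulrC.
    rewrite big_split /=; congr (_ + _).
      rewrite (bigD1 j) //= eqxx mul1r big1 ?addr0 // => i ij.
      by rewrite eq_sym (negPf ij) mul0r.
    by apply: eq_bigr => i _; rewrite he mulrC.
  move/eqP: vn0; apply; apply/rowP => j; rewrite mxE -he h0 //.
  exact: mem_nth.
pose X (k k' : idx) :=
  \sum_(i < n) (k == e i)%:R * \sum_(j < n) (k' == e j)%:R * invmx A i j.
have Xe a b : X (e a) (e b) = invmx A a b by rewrite /X !sum_delta.
exists X; split => k k' /e_surj [a ->] /e_surj [b ->]; rewrite sum_enum.
  have := congr1 (fun M : 'M_n => M a b) (mulVmx Au); rewrite !mxE e_eq => <-.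
  by apply: eq_bigr => l _; rewrite Xe !mxE e_eq.
have := congr1 (fun M : 'M_n => M a b) (mulmxV Au); rewrite !mxE e_eq => <-.
by apply: eq_bigr => l _; rewrite Xe !mxE e_eq.
Qed.

End Enumeration.

Lemma mulmA (C1 C2 : {fset idx}) (X1 X2 X3 : cmx) k k' :
  mulm C2 (mulm C1 X1 X2) X3 k k' = mulm C1 X1 (mulm C2 X2 X3) k k'.
Proof.
rewrite /mulm; under eq_bigr do rewrite mulr_suml.
rewrite exchange_big; apply: eq_bigr => j _; rewrite mulr_sumr.
by apply: eq_bigr => c _; rewrite mulrA.
Qed.

Lemma sum_fset_delta (B : {fset idx}) (F : idx -> R[i]) k : k \in B ->
  \sum_(j <- B) (k == j)%:R * F j = F k.
Proof.
move=> kB; rewrite (big_fsetD1 k) //= eqxx mul1r big1_fset ?addr0 // => j.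
by rewrite !inE => /andP[jk _] _; rewrite eq_sym (negPf jk) mul0r.
Qed.

Definition neumann_eq (B C : {fset idx}) (N P Y : cmx) : Prop :=
  forall k c, k \in B -> c \in C -> Y k c = N k c - mulm C N (mulm B P Y) k c.

Lemma left_inv_addm (B C : {fset idx}) (M N P : cmx) :
  left_inv B C N M -> idDmx_injective B (mulm C N P) ->
  exists Y : cmx, left_inv B C Y (addm M P) /\ neumann_eq B C N P Y.
Proof.
move=> NM_id Qinj; have [X [XQ_id QX_id]] := idDmx_inverse Qinj.
exists (mulm B X N); split.
  move=> k k' kB k'B; rewrite mulmA -(XQ_id k k' kB k'B) /mulm big_seq [RHS]big_seq.
  apply: eq_bigr => j jB; congr (_ * _).
  rewrite -(NM_id j k' jB k'B) /mulm /addm -big_split /=.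
  by apply: eq_bigr => c _; rewrite mulrDr.
move=> k c kB cC.
suff -> : N k c = mulm B X N k c + mulm B (mulm C N P) (mulm B X N) k c.
  by rewrite mulmA addrK.
have -> : mulm B X N k c + mulm B (mulm C N P) (mulm B X N) k c =
    \sum_(j <- B) ((k == j)%:R + mulm C N P k j) * mulm B X N j c.
  by under [RHS]eq_bigr do rewrite mulrDl; rewrite big_split /= sum_fset_delta.
rewrite /mulm; under eq_bigr do rewrite mulr_sumr.
rewrite exchange_big /= -(sum_fset_delta (fun l => N l c) kB) big_seq [RHS]big_seq.
apply: eq_bigr => l lB; rewrite -(QX_id k l kB lB) mulr_suml.
by apply: eq_bigr => j _; rewrite mulrA.
Qed.

End LeftInverse.

Section TameLeftInverse.
Variable R : realType.
Variable bb : nat.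
Variable nrm : forall m n : nat, 'M[R[i]]_(m, n) -> R.
Hypothesis hnrm : small_mx_norm nrm.
Variable K0 : R.
Hypothesis hK0 : 0 < K0.
Variables (s0 : R) (Cs : R -> R).
Hypotheses (hCs1 : forall s, s0 <= s -> 1 <= Cs s) (hCs0 : Cs s0 = 1)
  (hprod : sobolev_prod bb K0 s0 Cs).

Local Notation idx := (idx bb).
Local Notation cmx := (cmx R bb).
Local Notation tn := (tnorm nrm K0).

Lemma tnorm_mulm_s0 (A C B : {fset idx}) (X Y : cmx) :
  tn s0 A B (mulm C X Y) <= tn s0 A C X * tn s0 C B Y.
Proof.
apply: le_trans (tnorm_mulm hnrm hK0 hprod (lexx s0) A C B X Y) _.
by rewrite hCs0; lra.
Qed.

Lemma idDmx_injective_tnorm (B : {fset idx}) (Q : cmx) :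
  tn s0 B B Q < 1 -> idDmx_injective B Q.
Proof.
move=> Q_lt1 h h_fix; apply: (tnorm_colm_eq0 hnrm hK0 (s := s0)).
set col := [fset colidx bb]%fset; set z := tn s0 B col (colm h).
have z_le : z <= tn s0 B B Q * z.
  apply: le_trans (tnorm_mulm_s0 B B col Q (colm h)).
  rewrite -[tn s0 B col (mulm _ _ _)]add0r -(tnorm_cst0 hnrm K0 s0 B col).
  apply: tnormB_le => // k c kB; rewrite inE => /eqP ->.
  rewrite mulm_colm /colm eqxx sub0r; apply/eqP; rewrite -addr_eq0.
  exact/eqP/h_fix.
have z0 : 0 <= z by exact: tnorm_ge0.
have q0 : 0 <= tn s0 B B Q by exact: tnorm_ge0.
nra.
Qed.

Section Estimates.
Variables (B C : {fset idx}) (N P Y : cmx).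
Hypotheses (NP_small : tn s0 B C N * tn s0 C B P <= 2^-1)
  (Y_eq : neumann_eq B C N P Y).

Lemma tnorm_s0_neumann : tn s0 B C Y <= 2 * tn s0 B C N.
Proof.
have Y_le : tn s0 B C Y <= tn s0 B C N + tn s0 B C (mulm C N (mulm B P Y)).
  exact: tnormB_le.
have NPY_le := tnorm_mulm_s0 B C C N (mulm B P Y).
have PY_le := tnorm_mulm_s0 C B C P Y.
have a0 : 0 <= tn s0 B C N by exact: tnorm_ge0.
have y0 : 0 <= tn s0 B C Y by exact: tnorm_ge0.
have aPY : tn s0 B C N * tn s0 C C (mulm B P Y)
           <= tn s0 B C N * (tn s0 C B P * tn s0 B C Y) by exact: ler_wpM2l.
have ab_y : tn s0 B C N * tn s0 C B P * tn s0 B C Y <= 2^-1 * tn s0 B C Y.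
  exact: ler_wpM2r.
rewrite mulrA in aPY; lra.
Qed.

Lemma tnorm_s_neumann s : s0 <= s ->
  tn s B C Y <= (1 + 2 * Cs s * tn s0 B C N * tn s0 C B P) * tn s B C N
                + 2 * Cs s * tn s0 B C N ^+ 2 * tn s C B P.
Proof.
move=> hs; have c1 := hCs1 hs; have y_le := tnorm_s0_neumann; have ab := NP_small.
set a := tn s0 B C N in y_le ab *; set b := tn s0 C B P in ab *.
set y := tn s0 B C Y in y_le *; set c := Cs s in c1 *.
set Ns := tn s B C N; set Ps := tn s C B P; set Ys := tn s B C Y.
set Ws := tn s C C (mulm B P Y); set Wz := tn s0 C C (mulm B P Y).
have Ys_le : Ys <= Ns + tn s B C (mulm C N (mulm B P Y)) by exact: tnormB_le.
have NPY_le := tnorm_mulm hnrm hK0 hprod hs B C C N (mulm B P Y).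
have PY_le := tnorm_mulm hnrm hK0 hprod hs C B C P Y.
have PY0_le : Wz <= b * y := tnorm_mulm_s0 C B C P Y.
rewrite -/a -/Ns -/Ws -/Wz -/c in NPY_le; rewrite -/b -/Ps -/Ys -/y -/c -/Ws in PY_le.
have [a0 b0 y0] : [/\ 0 <= a, 0 <= b & 0 <= y] by split; exact: tnorm_ge0.
have [Ns0 Ps0] : 0 <= Ns /\ 0 <= Ps by split; exact: tnorm_ge0.
have c0 : 0 <= c by lra.
have aWs : a * Ws <= a * (2^-1 * b * Ys + c / 2 * Ps * y) by exact: ler_wpM2l.
have aPy : c * (a * (Ps * y)) <= c * (a * (Ps * (2 * a))).
  by do 2 apply: ler_wpM2l => //; rewrite ?mulr_ge0 //; apply: ler_wpM2l.
have NsWz : c * (Ns * Wz) <= c * (Ns * (b * (2 * a))).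
  by do 2 apply: ler_wpM2l => //; apply: le_trans PY0_le _; apply: ler_wpM2l.
have -> : 2 * c * a * b = 2 * c * (a * b) by ring.
have -> : 2 * c * a ^+ 2 * Ps = 2 * c * (a ^+ 2 * Ps) by ring.
apply: absorb_tame_bound; rewrite ?mulr_ge0 //.
have : Ys <= Ns + 2^-1 * a * Ws + c / 2 * Ns * Wz by lra.
rewrite !mulrDr in aWs; lra.
Qed.

End Estimates.

Lemma left_inv_addm_tnorm (B C : {fset idx}) (M N P : cmx) :
  left_inv B C N M -> tn s0 B C N * tn s0 C B P <= 2^-1 ->
  exists NP : cmx,
    [/\ left_inv B C NP (addm M P),
        tn s0 B C NP <= 2 * tn s0 B C N
      & forall s, s0 <= s ->
        tn s B C NP
          <= (1 + 2 * Cs s * tn s0 B C N * tn s0 C B P) * tn s B C N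
             + 2 * Cs s * tn s0 B C N ^+ 2 * tn s C B P
        /\ (1 + 2 * Cs s * tn s0 B C N * tn s0 C B P) * tn s B C N
             + 2 * Cs s * tn s0 B C N ^+ 2 * tn s C B P
           <= 2 * Cs s * (tn s B C N + tn s0 B C N ^+ 2 * tn s C B P)].
Proof.
move=> NM_id NP_small.
have NP_lt1 : tn s0 B B (mulm C N P) < 1.
  by apply: le_lt_trans (tnorm_mulm_s0 _ _ _ _ _) _; lra.
have [Y [Y_id Y_eq]] := left_inv_addm NM_id (idDmx_injective_tnorm NP_lt1).
exists Y; split => // [|s hs]; first exact: tnorm_s0_neumann NP_small Y_eq.
split; first exact (tnorm_s_neumann NP_small Y_eq hs).
have c1 := hCs1 hs; set c := Cs s in c1 *.
set a := tn s0 B C N; set b := tn s0 C B P; set Ns := tn s B C N.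
have [a0 b0 Ns0] : [/\ 0 <= a, 0 <= b & 0 <= Ns] by split; exact: tnorm_ge0.
have cabN : c * (a * b * Ns) <= c * (2^-1 * Ns) by rewrite ler_wpM2l ?ler_wpM2r //; lra.
have NscN : Ns <= c * Ns by rewrite ler_peMl.
rewrite -/a -/b -/Ns in NP_small *; lra.
Qed.

End TameLeftInverse.

Section OperatorNorm.
Variable R : realType.
Variable bb : nat.
Variable nrm : forall m n : nat, 'M[R[i]]_(m, n) -> R.
Hypothesis hnrm : small_mx_norm nrm.
Variable K0 : R.
Hypothesis hK0 : 0 < K0.

Local Notation idx := (idx bb).
Local Notation cmx := (cmx R bb).
Local Notation cvec := (cvec R bb).
Local Notation col := [fset colidx bb]%fset.
Local Notation vn := (vnorm nrm K0).
Local Notation on := (opnorm nrm K0).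

Lemma vnorm_ge0 (B : {fset idx}) (h : cvec) : 0 <= vn B h.
Proof. exact: tnorm_ge0. Qed.

Lemma vnorm_ext (B : {fset idx}) (h h' : cvec) :
  {in B, forall k, h k = h' k} -> vn B h = vn B h'.
Proof.
move=> H; apply: tnorm_ext => k c kB _; rewrite /colm; case: ifP => // _; exact: H.
Qed.

Lemma vnorm_cst0 (B : {fset idx}) : vn B (fun _ => 0) = 0.
Proof.
rewrite /vnorm (@tnorm_ext _ _ _ _ _ _ _ _ (fun _ _ => 0)) ?tnorm_cst0 // => k c _ _.
by rewrite /colm; case: ifP.
Qed.

Lemma vnorm_gt0 (B : {fset idx}) (h : cvec) :
  (exists2 k, k \in B & h k != 0) -> 0 < vn B h.
Proof.
move=> [k kB hk]; rewrite lt_def vnorm_ge0 andbT; apply: contra hk => /eqP h0.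
by rewrite (tnorm_colm_eq0 hnrm hK0 h0 kB).
Qed.

Lemma vnormB_le (B : {fset idx}) (g h1 h2 : cvec) :
  {in B, forall k, g k = h1 k - h2 k} -> vn B g <= vn B h1 + vn B h2.
Proof.
move=> H; apply: tnormB_le => // k c kB _; rewrite /colm; case: ifP => _.
  exact: H.
by rewrite subr0.
Qed.

Lemma matvec_mulm (C B : {fset idx}) (X Y : cmx) (h : cvec) k :
  matvec C (mulm B X Y) h k = matvec B X (matvec C Y h) k.
Proof.
rewrite /matvec /mulm; under eq_bigr do rewrite mulr_suml.
rewrite exchange_big; apply: eq_bigr => j _; rewrite mulr_sumr.
by apply: eq_bigr => c _; rewrite mulrA.
Qed.

Lemma brkM_mulm_le_sum (C B D : {fset idx}) (X Y : cmx) n :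
  brkM nrm C D (mulm B X Y) n
    <= (\sum_(n1 <- diffs C B) brkM nrm C B X n1) * \sum_(n2 <- diffs B D) brkM nrm B D Y n2.
Proof.
apply: le_trans (brkM_mulm_le hnrm _ _ _ _ _ _) _.
rewrite /brk_conv mulr_suml; apply: ler_sum => n1 _; rewrite mulr_sumr.
rewrite [X in _ <= X](bigID (fun n2 => n1 + n2 == n)) /= lerDl.
by apply: sumr_ge0 => n2 _; rewrite mulr_ge0 ?brkM_ge0.
Qed.

(* A crude bound: at s = 0 all weights are 1 and H_B is finite dimensional. *)
Lemma vnorm_matvec_bounded (C B : {fset idx}) (M : cmx) :
  exists2 K, 0 <= K & forall h : cvec, vn C (matvec B M h) <= K * vn B h.
Proof.
set F := \sum_(n <- diffs C B) brkM nrm C B M n.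
have F0 : 0 <= F by apply: sumr_ge0 => n _; apply: brkM_ge0.
pose SD : R := (size (diffs C col))%:R; pose S2 : R := (size (diffs B col))%:R.
exists (Num.sqrt (SD * F ^+ 2 * S2)); first exact: sqrtr_ge0.
move=> h; set g := brkM nrm B col (colm h).
set T := \sum_(n2 <- diffs B col) g n2.
have T0 : 0 <= T by apply: sumr_ge0 => n _; apply: brkM_ge0.
have -> : vn C (matvec B M h) = tnorm nrm K0 0 C col (mulm B M (colm h)).
  by apply: tnorm_ext => k c _ _; rewrite mulm_colm.
rewrite /vnorm /tnorm -sqrtrM ?mulr_ge0 ?ler0n //; apply: ler_wsqrtr.
under eq_bigr do rewrite mulr0 powRr0 mulr1.
under [X in _ <= _ * (_ * X)]eq_bigr do rewrite mulr0 powRr0 mulr1.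
rewrite -/g mulrCA; apply: ler_wpM2l; first exact: ltW.
apply: (@le_trans _ _ (SD * (F * T) ^+ 2)).
  rewrite /SD -sum1_size natr_sum mulr_suml; apply: ler_sum => n _; rewrite mul1r.
  by rewrite ler_sqr ?nnegrE ?brkM_ge0 ?mulr_ge0 ?brkM_mulm_le_sum.
rewrite exprMn -!mulrA; apply: ler_wpM2l; first exact: ler0n.
do 2 apply: ler_wpM2l => //.
Show.
exact: sqr_sum_le_size.
Qed.

Let ratios (C B : {fset idx}) (M : cmx) :=
  [set vn C (matvec B M h) / vn B h | h in [set h : cvec | exists2 k, k \in B & h k != 0]]%classic.

Lemma opnorm_ub (C B : {fset idx}) (M : cmx) : has_ubound (ratios C B M).
Proof.
have [K _ HK] := vnorm_matvec_bounded C B M.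
by exists K => r [h hn <-]; rewrite ler_pdivrMr ?vnorm_gt0 ?HK.
Qed.

Lemma opnorm_le (C B : {fset idx}) (M : cmx) x : 0 <= x ->
  (forall h : cvec, vn C (matvec B M h) <= x * vn B h) -> on C B M <= x.
Proof.
move=> x0 H; rewrite /opnorm -/(ratios C B M).
have [ne|/nonemptyPn ->] := pselect (ratios C B M !=set0)%classic; last by rewrite sup0.
by apply: ge_sup ne _ => r [h hn <-]; rewrite ler_pdivrMr ?vnorm_gt0 ?H.
Qed.

Lemma vnorm_matvec_le_opnorm (C B : {fset idx}) (M : cmx) (h : cvec) :
  vn C (matvec B M h) <= on C B M * vn B h.
Proof.
have [hn|h0] := pselect (exists2 k, k \in B & h k != 0).
  have := sup_upper_bound (conj (ex_intro _ _ (ex_intro2 _ _ h hn erefl)) (opnorm_ub C B M))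
    (ex_intro2 _ _ h hn erefl).
  by rewrite ler_pdivrMr ?vnorm_gt0.
have {}h0 : {in B, forall k, h k = 0}.
  by move=> k kB; apply/eqP/negPn/negP => hk; apply: h0; exists k.
have -> : vn C (matvec B M h) = vn C (fun _ => 0).
  apply: vnorm_ext => k _; rewrite /matvec big_seq big1 // => k' k'B.
  by rewrite h0 ?mulr0.
by rewrite (vnorm_ext h0) !vnorm_cst0 mulr0.
Qed.

Lemma opnorm_ge0 (C B : {fset idx}) (M : cmx) : 0 <= on C B M.
Proof.
rewrite /opnorm -/(ratios C B M).
have [[r [h hn hr]]|/nonemptyPn ->] := pselect (ratios C B M !=set0)%classic; last by rewrite sup0.
apply: le_trans (sup_upper_bound (conj (ex_intro _ r (ex_intro2 _ _ h hn hr)) (opnorm_ub C B M))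
  (ex_intro2 _ _ h hn hr)).
by rewrite -hr divr_ge0 ?vnorm_ge0.
Qed.

Lemma idDmx_injective_opnorm (B C : {fset idx}) (N P : cmx) :
  on B C N * on C B P < 1 -> idDmx_injective B (mulm C N P).
Proof.
move=> NP_lt1 h h_fix; suff h0 : vn B h = 0 by exact (tnorm_colm_eq0 hnrm hK0 h0).
set u := matvec B P h.
have h_le : vn B h <= vn B (matvec C N u).
  rewrite -[vn B (matvec C N u)]add0r -(vnorm_cst0 B); apply: vnormB_le => k kB.
  by rewrite sub0r -matvec_mulm; apply/eqP; rewrite -addr_eq0; apply/eqP/h_fix.
have Nu_le := vnorm_matvec_le_opnorm B C N u.
have u_le := vnorm_matvec_le_opnorm C B P h.
have [a0 h0] : 0 <= on B C N /\ 0 <= vn B h by split; [exact: opnorm_ge0 | exact: vnorm_ge0].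
have aPh : on B C N * vn C u <= on B C N * (on C B P * vn B h) by exact: ler_wpM2l.
rewrite mulrA in aPh; apply/eqP; rewrite eq_le h0 andbT; nra.
Qed.

Lemma left_inv_addm_opnorm (B C : {fset idx}) (M N P : cmx) :
  left_inv B C N M -> on B C N * on C B P <= 2^-1 ->
  exists NP : cmx, left_inv B C NP (addm M P) /\ on B C NP <= 2 * on B C N.
Proof.
move=> NM_id NP_small.
have NP_lt1 : on B C N * on C B P < 1 by apply: le_lt_trans NP_small _; lra.
have [Y [Y_id Y_eq]] := left_inv_addm NM_id (idDmx_injective_opnorm NP_lt1).
exists Y; split => //; apply: opnorm_le => [|h]; first by rewrite mulr_ge0 ?opnorm_ge0.
set v := matvec C Y h.
have v_le : vn B v <= vn B (matvec C N h) + vn B (matvec C N (matvec B P v)).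
  apply: vnormB_le => k kB.
  have -> : matvec C N (matvec B P v) k = matvec C (mulm C N (mulm B P Y)) h k.
    by rewrite matvec_mulm; congr matvec; apply/funext => c; rewrite matvec_mulm.
  rewrite /v /matvec -sumrB big_seq [RHS]big_seq; apply: eq_bigr => c cC.
  by rewrite Y_eq // mulrBl.
have Nh_le := vnorm_matvec_le_opnorm B C N h.
have NPv_le := vnorm_matvec_le_opnorm B C N (matvec B P v).
have Pv_le := vnorm_matvec_le_opnorm C B P v.
have [a0 v0] : 0 <= on B C N /\ 0 <= vn B v by split; [exact: opnorm_ge0 | exact: vnorm_ge0].
have aPv : on B C N * vn C (matvec B P v) <= on B C N * (on C B P * vn B v).
  exact: ler_wpM2l.
have abv : on B C N * on C B P * vn B v <= 2^-1 * vn B v by exact: ler_wpM2r.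
rewrite mulrA in aPv; lra.
Qed.

End OperatorNorm.

Theorem lemma3p9 (R : realType) (d nu : nat) (hd : (1 <= d)%N) (hnu : (1 <= nu)%N)
  (s0 : R) (hs0 : (nu + d)%:R / 2 < s0)
  (nrm : forall m n : nat, 'M[R[i]]_(m, n) -> R) (hnrm : small_mx_norm nrm)
  (K0 : R) (hK0 : 0 < K0) (Csob : R -> R)
  (hCsob1 : forall s, s0 <= s -> 1 <= Csob s) (hCsob0 : Csob s0 = 1)
  (hsup : sobolev_sup (nu + d) K0 s0) (hprod : sobolev_prod (nu + d) K0 s0 Csob) :
  exists Cs : R -> R,
  forall (B C : {fset idx (nu + d)}) (M N : cmx R (nu + d)),
    left_inv B C N M ->
    (forall P : cmx R (nu + d),
       tnorm nrm K0 s0 B C N * tnorm nrm K0 s0 C B P <= 2^-1 ->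
       exists NP : cmx R (nu + d),
         [/\ left_inv B C NP (addm M P),
             tnorm nrm K0 s0 B C NP <= 2 * tnorm nrm K0 s0 B C N
           & forall s, s0 <= s ->
             tnorm nrm K0 s B C NP
               <= (1 + Cs s * tnorm nrm K0 s0 B C N * tnorm nrm K0 s0 C B P)
                    * tnorm nrm K0 s B C N
                  + Cs s * tnorm nrm K0 s0 B C N ^+ 2 * tnorm nrm K0 s C B P
             /\ (1 + Cs s * tnorm nrm K0 s0 B C N * tnorm nrm K0 s0 C B P)
                    * tnorm nrm K0 s B C N
                  + Cs s * tnorm nrm K0 s0 B C N ^+ 2 * tnorm nrm K0 s C B P
                <= Cs s * (tnorm nrm K0 s B C N
                           + tnorm nrm K0 s0 B C N ^+ 2 * tnorm nrm K0 s C B P)])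
    /\
    (forall P : cmx R (nu + d),
       opnorm nrm K0 B C N * opnorm nrm K0 C B P <= 2^-1 ->
       exists NP : cmx R (nu + d),
         left_inv B C NP (addm M P)
         /\ opnorm nrm K0 B C NP <= 2 * opnorm nrm K0 B C N).
Proof.
exists (fun s => 2 * Csob s) => B C M N NM_id; split => P NP_small.
  exact (left_inv_addm_tnorm hnrm hK0 hCsob1 hCsob0 hprod NM_id NP_small).
exact (left_inv_addm_opnorm hnrm hK0 NM_id NP_small).
Qed.
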